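(* Let $P,Q\in C^{\infty}(\mathbb{R}^{2})$ be real-valued, and consider the planar vector field $x'=P(x,y),\ y'=Q(x,y)$ together with the first-order differential operator $D$ on $C^{\infty}(\mathbb{R}^{2})$ (complex-valued smooth functions) given by $D(U)=PU_{x}+QU_{y}$. Let $A$ be a self-adjoint subalgebra of $C^{\infty}(\mathbb{R}^{2})$ which separates compact submanifolds of $\mathbb{R}^{2}$, and assume $D(A)\subseteq A$. Then the number of closed orbits (periodic solutions) of the vector field is less than or equal to the codimension of the range $D(A)$ in $A$, i.e. $\dim_{\mathbb{C}} A/D(A)$.
   Context: A subalgebra $A\subseteq C^{\infty}(\mathbb{R}^{2})$ is self-adjoint if it is closed under complex conjugation. $A$ separates compact submanifolds of $\mathbb{R}^{2}$ if for every finite collection of pairwise disjoint smooth closed curves $\gamma_{1},\ldots,\gamma_{n}$ in $\mathbb{R}^{2}$ there exists a real-valued $f\in A$ such that $f(x_{i})\neq f(x_{j})$ for all $x_{i}\in\gamma_{i}$, $x_{j}\in\gamma_{j}$ with $i\neq j$. *)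

From Stdlib Require Import Reals.
From Coquelicot Require Import Coquelicot.
Open Scope R_scope.

Definition R2 := (R * R)%type.

Definition pdx (f : R -> R -> R) : R -> R -> R := fun x y => Derive (fun t => f t y) x.
Definition pdy (f : R -> R -> R) : R -> R -> R := fun x y => Derive (fun t => f x t) y.

Fixpoint Ck (k : nat) (f : R -> R -> R) : Prop :=
  match k with
  | O => forall p : R2, continuous (fun q : R2 => f (fst q) (snd q)) p
  | S k' => (forall p : R2, continuous (fun q : R2 => f (fst q) (snd q)) p)
            /\ (forall x y, ex_derive (fun t => f t y) x /\ ex_derive (fun t => f x t) y)
            /\ Ck k' (pdx f) /\ Ck k' (pdy f)
  end.

Definition smooth2 (f : R -> R -> R) : Prop := forall k, Ck k f.

Definition smooth1 (g : R -> R) : Prop := forall n x, ex_derive_n g n x.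

Definition Cfun := R -> R -> C.

Definition smoothC (U : Cfun) : Prop :=
  smooth2 (fun x y => Re (U x y)) /\ smooth2 (fun x y => Im (U x y)).

Definition pdxC (U : Cfun) : Cfun := fun x y =>
  (pdx (fun a b => Re (U a b)) x y, pdx (fun a b => Im (U a b)) x y).
Definition pdyC (U : Cfun) : Cfun := fun x y =>
  (pdy (fun a b => Re (U a b)) x y, pdy (fun a b => Im (U a b)) x y).

Definition Dop (P Q : R -> R -> R) (U : Cfun) : Cfun := fun x y =>
  Cplus (Cmult (RtoC (P x y)) (pdxC U x y)) (Cmult (RtoC (Q x y)) (pdyC U x y)).

Definition is_subalgebra (A : Cfun -> Prop) : Prop :=
  (forall U, A U -> smoothC U)
  /\ A (fun _ _ => RtoC 1)
  /\ (forall U V, A U -> A V -> A (fun x y => Cplus (U x y) (V x y)))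
  /\ (forall (c : C) U, A U -> A (fun x y => Cmult c (U x y)))
  /\ (forall U V, A U -> A V -> A (fun x y => Cmult (U x y) (V x y))).

Definition self_adjoint (A : Cfun -> Prop) : Prop :=
  forall U, A U -> A (fun x y => Cconj (U x y)).

(* S is (the image of) a smooth closed curve: an embedded smooth circle,
   given by a T-periodic immersion injective on [0,T) *)
Definition smooth_closed_curve (S : R2 -> Prop) : Prop :=
  exists (gx gy : R -> R) (T : R),
    0 < T /\ smooth1 gx /\ smooth1 gy
    /\ (forall t, gx (t + T) = gx t /\ gy (t + T) = gy t)
    /\ (forall s t, 0 <= s < T -> 0 <= t < T -> gx s = gx t -> gy s = gy t -> s = t)
    /\ (forall t, Derive gx t <> 0 \/ Derive gy t <> 0)
    /\ (forall p : R2, S p <-> exists t, p = (gx t, gy t)).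

Definition separates_compact_submanifolds (A : Cfun -> Prop) : Prop :=
  forall (n : nat) (S : nat -> R2 -> Prop),
    (forall i, (i < n)%nat -> smooth_closed_curve (S i)) ->
    (forall i j, (i < n)%nat -> (j < n)%nat -> i <> j -> forall p, ~ (S i p /\ S j p)) ->
    exists f : Cfun, A f /\ (forall x y, Im (f x y) = 0) /\
      (forall i j, (i < n)%nat -> (j < n)%nat -> i <> j ->
         forall p q : R2, S i p -> S j q -> f (fst p) (snd p) <> f (fst q) (snd q)).

Definition closed_orbit (P Q : R -> R -> R) (O : R2 -> Prop) : Prop :=
  exists (x y : R -> R) (T : R),
    0 < T
    /\ (forall t, is_derive x t (P (x t) (y t)) /\ is_derive y t (Q (x t) (y t)))
    /\ (forall t, x (t + T) = x t /\ y (t + T) = y t)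
    /\ (exists t, (x t, y t) <> (x 0, y 0))
    /\ (forall p : R2, O p <-> exists t, p = (x t, y t)).

Fixpoint csum (n : nat) (f : nat -> C) : C :=
  match n with
  | O => RtoC 0
  | S m => Cplus (csum m f) (f m)
  end.

From Stdlib Require Import Reals Lra Lia Classical IndefiniteDescription.
From Coquelicot Require Import Coquelicot.
Open Scope R_scope.

(* Choose a real-valued [f] in [A] separating the [n] orbits and take [u i = f ^ i].  If
   [sum c_i f^i = D V], the real and imaginary parts give [p (f) = D W] for real polynomials [p]
   with fewer than [n] coefficients and real smooth [W].  Along a closed orbit of period [T],
   [D W] is the derivative of [W] composed with the periodic solution, which takes the same value
   at [0] and [T]; by the mean value theorem [D W] vanishes somewhere on every orbit.  So [p] has a
   root in each of the [n] disjoint sets [f (O i)], hence [p = 0].  The analytic input is uniqueness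
   for the smooth ODE (a Groenwall estimate), which makes closed orbits embedded circles and
   distinct closed orbits disjoint, as the separation hypothesis requires. *)

(** * Smooth functions of two variables *)

Lemma continuous_uncurry_iff (f : R -> R -> R) :
  (forall p : R2, continuous (fun q : R2 => f (fst q) (snd q)) p) <->
  (forall x y, continuity_2d_pt f x y).
Proof.
  split.
  - intros H x y. apply continuity_2d_pt_filterlim, (H (x, y)).
  - intros H [x y]. apply continuity_2d_pt_filterlim, H.
Qed.

Lemma Ck_continuity k f : Ck k f -> forall x y, continuity_2d_pt f x y.
Proof. destruct k; intros H; apply (proj1 (continuous_uncurry_iff f)), H. Qed.

Lemma Ck_O_intro f : (forall x y, continuity_2d_pt f x y) -> Ck 0 f.
Proof. exact (proj2 (continuous_uncurry_iff f)). Qed.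

Lemma Ck_S_intro k f :
  (forall x y, continuity_2d_pt f x y) ->
  (forall x y, ex_derive (fun t => f t y) x /\ ex_derive (fun t => f x t) y) ->
  Ck k (pdx f) -> Ck k (pdy f) -> Ck (S k) f.
Proof. intros Hc Hd Hx Hy. split; [now apply (continuous_uncurry_iff f) | auto]. Qed.

Lemma Ck_S k f : Ck (S k) f -> Ck k f.
Proof.
  revert f; induction k as [|k IH]; intros f [Hc [Hd [Hx Hy]]].
  - exact Hc.
  - exact (conj Hc (conj Hd (conj (IH _ Hx) (IH _ Hy)))).
Qed.

Lemma Ck_ext k f g : (forall x y, f x y = g x y) -> Ck k f -> Ck k g.
Proof.
  revert f g; induction k as [|k IH]; intros f g E Hf.
  - apply Ck_O_intro; intros x y.
    apply continuity_2d_pt_ext with f; auto. now apply Ck_continuity with 0%nat.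
  - destruct Hf as [Hc [Hd [Hx Hy]]]. apply Ck_S_intro.
    + intros x y. apply continuity_2d_pt_ext with f; auto.
      now apply (proj1 (continuous_uncurry_iff f)).
    + intros x y. destruct (Hd x y) as [Dx Dy]. split.
      * now apply ex_derive_ext with (fun t => f t y).
      * now apply ex_derive_ext with (fun t => f x t).
    + apply IH with (pdx f); auto. intros x y. now apply Derive_ext.
    + apply IH with (pdy f); auto. intros x y. now apply Derive_ext.
Qed.

Lemma Ck_const k c : Ck k (fun _ _ => c).
Proof.
  revert c; induction k as [|k IH]; intros c.
  - apply Ck_O_intro; intros; apply continuity_2d_pt_const.
  - apply Ck_S_intro.
    + intros; apply continuity_2d_pt_const.
    + intros; split; apply ex_derive_const.
    + apply Ck_ext with (fun _ _ => 0); [| apply IH].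
      intros; unfold pdx; symmetry; apply Derive_const.
    + apply Ck_ext with (fun _ _ => 0); [| apply IH].
      intros; unfold pdy; symmetry; apply Derive_const.
Qed.

Lemma Ck_fst k : Ck k (fun a _ => a).
Proof.
  destruct k.
  - apply Ck_O_intro; intros; apply continuity_2d_pt_id1.
  - apply Ck_S_intro.
    + intros; apply continuity_2d_pt_id1.
    + intros; split; [apply ex_derive_id | apply ex_derive_const].
    + apply Ck_ext with (fun _ _ => 1); [| apply Ck_const].
      intros; unfold pdx; symmetry; apply Derive_id.
    + apply Ck_ext with (fun _ _ => 0); [| apply Ck_const].
      intros; unfold pdy; symmetry; apply Derive_const.
Qed.

Lemma Ck_snd k : Ck k (fun _ b => b).
Proof.
  destruct k.
  - apply Ck_O_intro; intros; apply continuity_2d_pt_id2.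
  - apply Ck_S_intro.
    + intros; apply continuity_2d_pt_id2.
    + intros; split; [apply ex_derive_const | apply ex_derive_id].
    + apply Ck_ext with (fun _ _ => 0); [| apply Ck_const].
      intros; unfold pdx; symmetry; apply Derive_const.
    + apply Ck_ext with (fun _ _ => 1); [| apply Ck_const].
      intros; unfold pdy; symmetry; apply Derive_id.
Qed.

Lemma Ck_plus k f g : Ck k f -> Ck k g -> Ck k (fun x y => f x y + g x y).
Proof.
  revert f g; induction k as [|k IH]; intros f g Hf Hg.
  - apply Ck_O_intro; intros.
    apply continuity_2d_pt_plus; now apply Ck_continuity with 0%nat.
  - assert (Cf := Ck_continuity _ _ Hf). assert (Cg := Ck_continuity _ _ Hg).
    destruct Hf as [_ [Df [Fx Fy]]], Hg as [_ [Dg [Gx Gy]]].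
    apply Ck_S_intro.
    + intros; now apply continuity_2d_pt_plus.
    + intros x y. destruct (Df x y) as [F1 F2], (Dg x y) as [G1 G2].
      exact (conj (ex_derive_plus _ _ _ F1 G1) (ex_derive_plus _ _ _ F2 G2)).
    + apply Ck_ext with (fun x y => pdx f x y + pdx g x y); [|now apply IH].
      intros x y. symmetry.
      exact (Derive_plus (fun t => f t y) (fun t => g t y) x (proj1 (Df x y)) (proj1 (Dg x y))).
    + apply Ck_ext with (fun x y => pdy f x y + pdy g x y); [|now apply IH].
      intros x y. symmetry.
      exact (Derive_plus (fun t => f x t) (fun t => g x t) y (proj2 (Df x y)) (proj2 (Dg x y))).
Qed.

Lemma Ck_mult k f g : Ck k f -> Ck k g -> Ck k (fun x y => f x y * g x y).
Proof.
  revert f g; induction k as [|k IH]; intros f g Hf Hg.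
  - apply Ck_O_intro; intros.
    apply continuity_2d_pt_mult; now apply Ck_continuity with 0%nat.
  - assert (Cf := Ck_continuity _ _ Hf). assert (Cg := Ck_continuity _ _ Hg).
    assert (Hf' := Ck_S _ _ Hf). assert (Hg' := Ck_S _ _ Hg).
    destruct Hf as [_ [Df [Fx Fy]]], Hg as [_ [Dg [Gx Gy]]].
    apply Ck_S_intro.
    + intros; now apply continuity_2d_pt_mult.
    + intros x y. destruct (Df x y) as [F1 F2], (Dg x y) as [G1 G2].
      exact (conj (ex_derive_mult _ _ _ F1 G1) (ex_derive_mult _ _ _ F2 G2)).
    + apply Ck_ext with (fun x y => pdx f x y * g x y + f x y * pdx g x y).
      * intros x y. symmetry.
        exact (Derive_mult (fun t => f t y) (fun t => g t y) x (proj1 (Df x y)) (proj1 (Dg x y))).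
      * apply Ck_plus; now apply IH.
    + apply Ck_ext with (fun x y => pdy f x y * g x y + f x y * pdy g x y).
      * intros x y. symmetry.
        exact (Derive_mult (fun t => f x t) (fun t => g x t) y (proj2 (Df x y)) (proj2 (Dg x y))).
      * apply Ck_plus; now apply IH.
Qed.

Lemma Ck_ex_diff_n k f x y : Ck k f -> ex_diff_n f k x y.
Proof.
  revert f; induction k as [|k IH]; intros f Hf.
  - exact (conj (Ck_continuity _ _ Hf x y) I).
  - assert (Cf := Ck_continuity _ _ Hf).
    destruct Hf as [_ [Df [Fx Fy]]].
    destruct (Df x y) as [Dx Dy].
    exact (conj (Cf x y) (conj Dx (conj Dy (conj (IH _ Fx) (IH _ Fy))))).
Qed.

Lemma smooth2_plus f g : smooth2 f -> smooth2 g -> smooth2 (fun x y => f x y + g x y).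
Proof. intros Hf Hg k. now apply Ck_plus. Qed.

Lemma smooth2_mult f g : smooth2 f -> smooth2 g -> smooth2 (fun x y => f x y * g x y).
Proof. intros Hf Hg k. now apply Ck_mult. Qed.

Lemma smooth2_pdx f : smooth2 f -> smooth2 (pdx f).
Proof. intros H k. exact (proj1 (proj2 (proj2 (H (S k))))). Qed.

Lemma smooth2_pdy f : smooth2 f -> smooth2 (pdy f).
Proof. intros H k. exact (proj2 (proj2 (proj2 (H (S k))))). Qed.

Lemma smooth2_ex_derive f x y : smooth2 f ->
  ex_derive (fun t => f t y) x /\ ex_derive (fun t => f x t) y.
Proof. intros H. exact (proj1 (proj2 (H 1%nat)) x y). Qed.

Lemma smooth2_continuity f x y : smooth2 f -> continuity_2d_pt f x y.
Proof. intros H. exact (Ck_continuity _ _ (H 0%nat) x y). Qed.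

Lemma DL_pol_1 f x y du dv :
  DL_pol 1 f x y du dv = f x y + (pdx f x y * du + pdy f x y * dv).
Proof.
  unfold DL_pol, differential, partial_derive, pdx, pdy, Binomial.C; simpl. field.
Qed.

Lemma smooth2_differentiable f x y : smooth2 f ->
  differentiable_pt_lim f x y (pdx f x y) (pdy f x y).
Proof.
  intros Hf eps.
  destruct (Taylor_Lagrange_2d f 1 x y) as [D [d Hd]].
  { exists (mkposreal 1 Rlt_0_1). intros u v _ _. apply Ck_ex_diff_n, Hf. }
  pose proof (Rabs_pos D) as HD. pose proof (Rle_abs D) as HD'. pose proof (cond_pos eps).
  assert (Hr : 0 < eps / (Rabs D + 1)) by (apply Rdiv_lt_0_compat; lra).
  exists (mkposreal _ (Rmin_pos _ _ (cond_pos d) Hr)). simpl. intros u v Hu Hv.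
  specialize (Hd u v (Rlt_le_trans _ _ _ Hu (Rmin_l _ _)) (Rlt_le_trans _ _ _ Hv (Rmin_l _ _))).
  rewrite DL_pol_1 in Hd.
  set (m := Rmax (Rabs (u - x)) (Rabs (v - y))) in *.
  assert (Hm0 : 0 <= m) by (eapply Rle_trans; [apply Rabs_pos | apply Rmax_l]).
  assert (Hm : m * (Rabs D + 1) < eps).
  { assert (Hlt : m < eps / (Rabs D + 1)).
    { apply Rmax_lub_lt; eapply Rlt_le_trans; eauto; apply Rmin_r. }
    apply (Rmult_lt_compat_r (Rabs D + 1)) in Hlt; [|lra].
    unfold Rdiv in Hlt. rewrite Rmult_assoc, Rinv_l, Rmult_1_r in Hlt by lra. exact Hlt. }
  replace (f u v - f x y - _) with (f u v - (f x y + (pdx f x y * (u - x) + pdy f x y * (v - y))))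
    by ring.
  eapply Rle_trans; [exact Hd |]. simpl. nra.
Qed.

(** * Solutions of the vector field *)

Lemma is_derive_comp_smooth2 g x y t dx dy : smooth2 g ->
  is_derive x t dx -> is_derive y t dy ->
  is_derive (fun s => g (x s) (y s)) t (dx * pdx g (x t) (y t) + dy * pdy g (x t) (y t)).
Proof.
  intros Hg Hx Hy.
  replace (dx * _ + dy * _) with (pdx g (x t) (y t) * dx + pdy g (x t) (y t) * dy) by ring.
  apply is_derive_Reals, derivable_pt_lim_comp_2d;
    [apply smooth2_differentiable, Hg | apply is_derive_Reals, Hx | apply is_derive_Reals, Hy].
Qed.

Lemma is_derive_comp_R f g t df dg :
  is_derive f (g t) df -> is_derive g t dg -> is_derive (fun s => f (g s)) t (dg * df).
Proof. intros Hf Hg. exact (is_derive_comp f g t df dg Hf Hg). Qed.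

Definition solution (P Q : R -> R -> R) (x y : R -> R) : Prop :=
  forall t, is_derive x t (P (x t) (y t)) /\ is_derive y t (Q (x t) (y t)).

Definition lie_deriv (P Q g : R -> R -> R) : R -> R -> R :=
  fun a b => P a b * pdx g a b + Q a b * pdy g a b.

Lemma smooth2_lie_deriv P Q g :
  smooth2 P -> smooth2 Q -> smooth2 g -> smooth2 (lie_deriv P Q g).
Proof.
  intros. apply smooth2_plus; apply smooth2_mult; auto using smooth2_pdx, smooth2_pdy.
Qed.

Lemma is_derive_lie_deriv P Q x y g t : solution P Q x y -> smooth2 g ->
  is_derive (fun s => g (x s) (y s)) t (lie_deriv P Q g (x t) (y t)).
Proof. intros Hs Hg. apply is_derive_comp_smooth2; [exact Hg | apply Hs | apply Hs]. Qed.

Lemma Derive_n_along_solution P Q x y g n t :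
  smooth2 P -> smooth2 Q -> solution P Q x y -> smooth2 g ->
  ex_derive_n (fun s => g (x s) (y s)) n t /\
  Derive_n (fun s => g (x s) (y s)) n t = Nat.iter n (lie_deriv P Q) g (x t) (y t).
Proof.
  intros HP HQ Hs Hg. revert t; induction n as [|n IH]; intros t; [split; reflexivity|].
  assert (Hsm : smooth2 (Nat.iter n (lie_deriv P Q) g)).
  { clear IH; induction n; [exact Hg | now apply smooth2_lie_deriv]. }
  assert (Hd : is_derive (Derive_n (fun s => g (x s) (y s)) n) t
                 (Nat.iter (S n) (lie_deriv P Q) g (x t) (y t))).
  { apply is_derive_ext with (fun s => Nat.iter n (lie_deriv P Q) g (x s) (y s)).
    - intros s. symmetry. apply IH.
    - now apply is_derive_lie_deriv. }
  split; [eexists; exact Hd | exact (is_derive_unique _ _ _ Hd)].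
Qed.

Lemma solution_smooth1 P Q x y : smooth2 P -> smooth2 Q -> solution P Q x y ->
  smooth1 x /\ smooth1 y.
Proof.
  intros HP HQ Hs. split; intros n t.
  - exact (proj1 (Derive_n_along_solution P Q x y (fun a _ => a) n t HP HQ Hs (Ck_fst))).
  - exact (proj1 (Derive_n_along_solution P Q x y (fun _ b => b) n t HP HQ Hs (Ck_snd))).
Qed.

Lemma solution_continuity P Q x y t : solution P Q x y ->
  continuity_pt x t /\ continuity_pt y t.
Proof.
  intros Hs. destruct (Hs t) as [Hx Hy].
  split; apply continuity_pt_filterlim.
  - apply (ex_derive_continuous x t). eexists; exact Hx.
  - apply (ex_derive_continuous y t). eexists; exact Hy.
Qed.

Lemma solution_shift P Q x y c : solution P Q x y ->
  solution P Q (fun t => x (t + c)) (fun t => y (t + c)).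
Proof.
  intros Hs t. destruct (Hs (t + c)) as [Hx Hy].
  assert (Ht : is_derive (fun s => s + c) t 1) by (auto_derive; [exact I | ring]).
  rewrite <- (Rmult_1_l (P _ _)), <- (Rmult_1_l (Q _ _)).
  split; now apply is_derive_comp_R.
Qed.

Lemma solution_reverse P Q x y : solution P Q x y ->
  solution (fun a b => - P a b) (fun a b => - Q a b) (fun t => x (- t)) (fun t => y (- t)).
Proof.
  intros Hs t. destruct (Hs (- t)) as [Hx Hy].
  assert (Ht : is_derive (fun s => - s) t (-1)) by (auto_derive; [exact I | ring]).
  replace (- P _ _) with (-1 * P (x (- t)) (y (- t))) by ring.
  replace (- Q _ _) with (-1 * Q (x (- t)) (y (- t))) by ring.
  split; now apply is_derive_comp_R.
Qed.

(** * Local Lipschitz estimates and uniqueness of solutions *)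

Definition locally_lipschitz (F : R -> R -> R) : Prop :=
  forall a b, exists d L, 0 < d /\ 0 <= L /\
    forall u1 v1 u2 v2, Rabs (u1 - a) < d -> Rabs (v1 - b) < d ->
      Rabs (u2 - a) < d -> Rabs (v2 - b) < d ->
      Rabs (F u1 v1 - F u2 v2) <= L * (Rabs (u1 - u2) + Rabs (v1 - v2)).

Lemma locally_lipschitz_opp F : locally_lipschitz F -> locally_lipschitz (fun a b => - F a b).
Proof.
  intros H a b. destruct (H a b) as [d [L [Hd [HL HF]]]].
  exists d, L. split; [exact Hd | split; [exact HL |]]. intros.
  replace (- F u1 v1 - - F u2 v2) with (- (F u1 v1 - F u2 v2)) by ring.
  rewrite Rabs_Ropp. auto.
Qed.

Lemma continuity_2d_pt_locally_bounded f a b : continuity_2d_pt f a b ->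
  exists d, 0 < d /\ forall u v, Rabs (u - a) < d -> Rabs (v - b) < d ->
    Rabs (f u v) <= Rabs (f a b) + 1.
Proof.
  intros H. destruct (H (mkposreal 1 Rlt_0_1)) as [d Hd].
  exists d. split; [apply cond_pos |]. intros u v Hu Hv.
  specialize (Hd u v Hu Hv). pose proof (Rabs_triang_inv (f u v) (f a b)). simpl in Hd. lra.
Qed.

Lemma Rabs_sub_between a d u1 u2 t : Rmin u1 u2 <= t <= Rmax u1 u2 ->
  Rabs (u1 - a) < d -> Rabs (u2 - a) < d -> Rabs (t - a) < d.
Proof.
  intros Ht H1 H2. apply Rabs_def2 in H1, H2.
  apply Rabs_def1; unfold Rmin, Rmax in Ht; destruct (Rle_dec u1 u2); lra.
Qed.

Lemma Rabs_sub_le_of_Derive_bound f K a b :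
  (forall t, Rmin a b <= t <= Rmax a b -> ex_derive f t /\ Rabs (Derive f t) <= K) ->
  Rabs (f b - f a) <= K * Rabs (b - a).
Proof.
  intros H. destruct (MVT_abs f (Derive f) a b) as [c [E Hc]].
  { intros c Hc. apply is_derive_Reals, Derive_correct, H, Hc. }
  rewrite E. apply Rmult_le_compat_r; [apply Rabs_pos | apply H, Hc].
Qed.

Lemma smooth2_locally_lipschitz F : smooth2 F -> locally_lipschitz F.
Proof.
  intros HF a b.
  destruct (continuity_2d_pt_locally_bounded (pdx F) a b) as [d1 [Hd1 Bx]];
    [now apply smooth2_continuity, smooth2_pdx |].
  destruct (continuity_2d_pt_locally_bounded (pdy F) a b) as [d2 [Hd2 By]];
    [now apply smooth2_continuity, smooth2_pdy |].
  set (Kx := Rabs (pdx F a b) + 1). set (Ky := Rabs (pdy F a b) + 1).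
  assert (HKx : 0 <= Kx) by (pose proof (Rabs_pos (pdx F a b)); unfold Kx; lra).
  assert (HKy : 0 <= Ky) by (pose proof (Rabs_pos (pdy F a b)); unfold Ky; lra).
  exists (Rmin d1 d2), (Kx + Ky). split; [now apply Rmin_pos | split; [lra |]].
  intros u1 v1 u2 v2 Hu1 Hv1 Hu2 Hv2.
  pose proof (Rmin_l d1 d2). pose proof (Rmin_r d1 d2).
  assert (Ex : Rabs (F u1 v1 - F u2 v1) <= Kx * Rabs (u1 - u2)).
  { apply (Rabs_sub_le_of_Derive_bound (fun t => F t v1)). intros t Ht.
    split; [exact (proj1 (smooth2_ex_derive F t v1 HF)) |].
    apply Bx; [apply (Rabs_sub_between a _ u2 u1) | ]; auto; lra. }
  assert (Ey : Rabs (F u2 v1 - F u2 v2) <= Ky * Rabs (v1 - v2)).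
  { rewrite <- Rabs_Ropp, Ropp_minus_distr, <- (Rabs_Ropp (v1 - v2)), Ropp_minus_distr.
    apply (Rabs_sub_le_of_Derive_bound (fun t => F u2 t)). intros t Ht.
    split; [exact (proj2 (smooth2_ex_derive F u2 t HF)) |].
    apply By; [| apply (Rabs_sub_between b _ v1 v2)]; auto; lra. }
  replace (F u1 v1 - F u2 v2) with ((F u1 v1 - F u2 v1) + (F u2 v1 - F u2 v2)) by ring.
  pose proof (Rabs_triang (F u1 v1 - F u2 v1) (F u2 v1 - F u2 v2)).
  pose proof (Rabs_pos (u1 - u2)). pose proof (Rabs_pos (v1 - v2)).
  nra.
Qed.

Lemma Gronwall_zero (w dw : R -> R) K t0 t1 :
  (forall t, is_derive w t (dw t)) -> (forall t, t0 <= t <= t1 -> dw t <= K * w t) ->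
  (forall t, 0 <= w t) -> w t0 = 0 -> forall t, t0 <= t <= t1 -> w t = 0.
Proof.
  intros Dw Hle Hpos H0 t Ht.
  destruct (Req_dec t t0) as [-> | Hne]; [exact H0 |].
  set (dg := fun s => (dw s - K * w s) * exp (- K * s)).
  destruct (MVT_cor3 (fun s => w s * exp (- K * s)) dg t0 t) as [c [Hc1 [Hc2 E]]];
    [lra | |].
  { intros s _ _. apply is_derive_Reals. auto_derive; [apply (ex_intro _ _ (Dw s)) |].
    replace (Derive (fun x : R => w x) s) with (dw s) by (symmetry; apply is_derive_unique, Dw).
    unfold dg. ring. }
  assert (Hdg : dg c <= 0).
  { pose proof (exp_pos (- K * c)).
    pose proof (Hle c (conj Hc1 (Rle_trans _ _ _ Hc2 (proj2 Ht)))). unfold dg. nra. }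
  rewrite H0, Rmult_0_l, Rplus_0_l in E.
  pose proof (exp_pos (- K * t)). pose proof (Hpos t). nra.
Qed.

Lemma lipschitz_energy_le a b p q L1 L2 : 0 <= L1 -> 0 <= L2 ->
  Rabs p <= L1 * (Rabs a + Rabs b) -> Rabs q <= L2 * (Rabs a + Rabs b) ->
  2 * a * p + 2 * b * q <= 4 * (L1 + L2) * (a ^ 2 + b ^ 2).
Proof.
  intros H1 H2 Hp Hq.
  assert (Ha : a * p <= Rabs a * Rabs p) by (rewrite <- Rabs_mult; apply Rle_abs).
  assert (Hb : b * q <= Rabs b * Rabs q) by (rewrite <- Rabs_mult; apply Rle_abs).
  rewrite <- (pow2_abs a), <- (pow2_abs b).
  pose proof (Rabs_pos a). pose proof (Rabs_pos b).
  assert (Rabs a * Rabs p <= Rabs a * (L1 * (Rabs a + Rabs b))) by now apply Rmult_le_compat_l.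
  assert (Rabs b * Rabs q <= Rabs b * (L2 * (Rabs a + Rabs b))) by now apply Rmult_le_compat_l.
  assert (0 <= L1 * (Rabs a - Rabs b) ^ 2) by (apply Rmult_le_pos; [lra | apply pow2_ge_0]).
  assert (0 <= L2 * (Rabs a - Rabs b) ^ 2) by (apply Rmult_le_pos; [lra | apply pow2_ge_0]).
  assert (0 <= L1 * Rabs b ^ 2 + L2 * Rabs a ^ 2) by
    (apply Rplus_le_le_0_compat; apply Rmult_le_pos; auto; apply pow2_ge_0).
  nra.
Qed.

Lemma solution_near P Q x y t0 d : solution P Q x y -> 0 < d ->
  exists e, 0 < e /\ forall t, Rabs (t - t0) < e ->
    Rabs (x t - x t0) < d /\ Rabs (y t - y t0) < d.
Proof.
  intros Hs Hd. destruct (solution_continuity P Q x y t0 Hs) as [Cx Cy].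
  destruct (proj1 (continuity_pt_locally x t0) Cx (mkposreal d Hd)) as [e1 H1].
  destruct (proj1 (continuity_pt_locally y t0) Cy (mkposreal d Hd)) as [e2 H2].
  exists (Rmin e1 e2). split; [apply Rmin_pos; apply cond_pos |]. intros t Ht.
  split; [apply H1 | apply H2]; eapply Rlt_le_trans; eauto; [apply Rmin_l | apply Rmin_r].
Qed.

Lemma is_derive_sq_dist_solutions P Q x1 y1 x2 y2 :
  solution P Q x1 y1 -> solution P Q x2 y2 -> forall t,
  is_derive (fun s => (x1 s - x2 s) ^ 2 + (y1 s - y2 s) ^ 2) t
    (2 * (x1 t - x2 t) * (P (x1 t) (y1 t) - P (x2 t) (y2 t))
     + 2 * (y1 t - y2 t) * (Q (x1 t) (y1 t) - Q (x2 t) (y2 t))).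
Proof.
  intros S1 S2 t. destruct (S1 t) as [X1 Y1], (S2 t) as [X2 Y2].
  assert (K1 : Derive (fun s => x1 s) t = P (x1 t) (y1 t)) by exact (is_derive_unique _ _ _ X1).
  assert (K2 : Derive (fun s => y1 s) t = Q (x1 t) (y1 t)) by exact (is_derive_unique _ _ _ Y1).
  assert (K3 : Derive (fun s => x2 s) t = P (x2 t) (y2 t)) by exact (is_derive_unique _ _ _ X2).
  assert (K4 : Derive (fun s => y2 s) t = Q (x2 t) (y2 t)) by exact (is_derive_unique _ _ _ Y2).
  auto_derive; [repeat split; eexists; eassumption |].
  rewrite K1, K2, K3, K4. ring.
Qed.

Lemma solutions_agree_right P Q x1 y1 x2 y2 t0 :
  locally_lipschitz P -> locally_lipschitz Q ->
  solution P Q x1 y1 -> solution P Q x2 y2 -> x1 t0 = x2 t0 -> y1 t0 = y2 t0 ->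
  exists e, 0 < e /\ forall t, t0 <= t <= t0 + e -> x1 t = x2 t /\ y1 t = y2 t.
Proof.
  intros HP HQ S1 S2 Ex Ey.
  destruct (HP (x1 t0) (y1 t0)) as [d1 [L1 [Hd1 [HL1 LP]]]].
  destruct (HQ (x1 t0) (y1 t0)) as [d2 [L2 [Hd2 [HL2 LQ]]]].
  pose proof (Rmin_l d1 d2). pose proof (Rmin_r d1 d2).
  destruct (solution_near P Q x1 y1 t0 _ S1 (Rmin_pos _ _ Hd1 Hd2)) as [e1 [He1 N1]].
  destruct (solution_near P Q x2 y2 t0 _ S2 (Rmin_pos _ _ Hd1 Hd2)) as [e2 [He2 N2]].
  rewrite <- Ex, <- Ey in N2.
  set (w := fun t => (x1 t - x2 t) ^ 2 + (y1 t - y2 t) ^ 2).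
  assert (Dw := is_derive_sq_dist_solutions P Q x1 y1 x2 y2 S1 S2).
  assert (He : 0 < Rmin e1 e2) by now apply Rmin_pos.
  set (e := Rmin e1 e2 / 2).
  exists e. split; [unfold e; lra |]. intros t Ht.
  assert (Hw : w t = 0).
  { apply (Gronwall_zero w _ (4 * (L1 + L2)) t0 (t0 + e) Dw); auto.
    - intros s Hs.
      assert (Hse : Rabs (s - t0) < e1 /\ Rabs (s - t0) < e2).
      { rewrite Rabs_pos_eq by lra. pose proof (Rmin_l e1 e2). pose proof (Rmin_r e1 e2).
        unfold e in Hs. lra. }
      destruct (N1 s (proj1 Hse)) as [Nx1 Ny1], (N2 s (proj2 Hse)) as [Nx2 Ny2].
      apply lipschitz_energy_le; auto; [apply LP | apply LQ]; lra.
    - intros s. unfold w. pose proof (pow2_ge_0 (x1 s - x2 s)).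
      pose proof (pow2_ge_0 (y1 s - y2 s)). lra.
    - unfold w. rewrite Ex, Ey. ring. }
  unfold w in Hw. pose proof (pow2_ge_0 (x1 t - x2 t)). pose proof (pow2_ge_0 (y1 t - y2 t)).
  split; nra.
Qed.

Lemma real_induction (E : R -> Prop) t0 :
  E t0 ->
  (forall t, t0 <= t -> E t -> exists e, 0 < e /\ forall u, t <= u <= t + e -> E u) ->
  (forall m, t0 < m -> (forall u, t0 <= u < m -> E u) -> E m) ->
  forall t, t0 <= t -> E t.
Proof.
  intros H0 Hstep Hlim t1 Ht1.
  set (G := fun t => t0 <= t <= t1 /\ forall u, t0 <= u <= t -> E u).
  assert (G0 : G t0) by (split; [lra | intros u Hu; replace u with t0 by lra; exact H0]).
  destruct (completeness G) as [m [Hub Hlub]];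
    [exists t1; intros t [Ht _]; lra | exists t0; exact G0 |].
  assert (Hm0 : t0 <= m) by (apply Hub, G0).
  assert (Hm1 : m <= t1) by (apply Hlub; intros t [Ht _]; lra).
  assert (Hbelow : forall u, t0 <= u < m -> E u).
  { intros u Hu. apply NNPP. intros Hn.
    assert (Hu_ub : is_upper_bound G u).
    { intros t [_ Gt]. destruct (Rle_lt_dec t u) as [| Hlt]; [assumption |].
      exfalso. apply Hn, Gt. lra. }
    specialize (Hlub u Hu_ub). lra. }
  assert (Em : E m).
  { destruct (Req_dec t0 m) as [<- | Hne]; [exact H0 | apply Hlim; [lra | exact Hbelow]]. }
  destruct (Req_dec m t1) as [<- | Hne]; [exact Em |].
  destruct (Hstep m Hm0 Em) as [e [He Hext]].
  assert (Gm : G (Rmin (m + e) t1)).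
  { split; [split; [apply Rmin_glb; lra | apply Rmin_r] |].
    intros u Hu. destruct (Rlt_le_dec u m); [apply Hbelow; lra |].
    apply Hext. pose proof (Rmin_l (m + e) t1). lra. }
  specialize (Hub _ Gm). assert (m < Rmin (m + e) t1) by (apply Rmin_glb_lt; lra). lra.
Qed.

Lemma continuity_pt_zero_at_end f t0 m : t0 < m -> continuity_pt f m ->
  (forall u, t0 <= u < m -> f u = 0) -> f m = 0.
Proof.
  intros Hm Hc H. apply NNPP. intros Hn.
  assert (Hp : 0 < Rabs (f m)) by now apply Rabs_pos_lt.
  destruct (proj1 (continuity_pt_locally f m) Hc (mkposreal _ Hp)) as [d Hd].
  pose proof (cond_pos d).
  set (u := Rmax t0 (m - d / 2)).
  assert (Hu : t0 <= u < m) by (split; [apply Rmax_l | apply Rmax_lub_lt; lra]).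
  assert (B : Rabs (f u - f m) < Rabs (f m)).
  { apply (Hd u). change (Rabs (u - m) < d).
    assert (m - d / 2 <= u) by apply Rmax_r.
    rewrite Rabs_left; lra. }
  rewrite (H u Hu), Rminus_0_l, Rabs_Ropp in B. lra.
Qed.

Lemma solutions_agree_forward P Q x1 y1 x2 y2 t0 :
  locally_lipschitz P -> locally_lipschitz Q ->
  solution P Q x1 y1 -> solution P Q x2 y2 -> x1 t0 = x2 t0 -> y1 t0 = y2 t0 ->
  forall t, t0 <= t -> x1 t = x2 t /\ y1 t = y2 t.
Proof.
  intros HP HQ S1 S2 Ex Ey.
  apply real_induction; [now split | |].
  - intros t _ [Ht1 Ht2]. now apply (solutions_agree_right P Q).
  - intros m Hm Hbelow.
    destruct (solution_continuity P Q x1 y1 m S1) as [Cx1 Cy1].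
    destruct (solution_continuity P Q x2 y2 m S2) as [Cx2 Cy2].
    split; apply Rminus_diag_uniq.
    + apply (continuity_pt_zero_at_end (fun s => x1 s - x2 s) t0); auto.
      * now apply continuity_pt_minus.
      * intros u Hu. rewrite (proj1 (Hbelow u Hu)). ring.
    + apply (continuity_pt_zero_at_end (fun s => y1 s - y2 s) t0); auto.
      * now apply continuity_pt_minus.
      * intros u Hu. rewrite (proj2 (Hbelow u Hu)). ring.
Qed.

Lemma solution_unique P Q x1 y1 x2 y2 t0 :
  locally_lipschitz P -> locally_lipschitz Q ->
  solution P Q x1 y1 -> solution P Q x2 y2 -> x1 t0 = x2 t0 -> y1 t0 = y2 t0 ->
  forall t, x1 t = x2 t /\ y1 t = y2 t.
Proof.
  intros HP HQ S1 S2 Ex Ey t. destruct (Rle_lt_dec t0 t).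
  - now apply (solutions_agree_forward P Q x1 y1 x2 y2 t0).
  - assert (Hrev := solutions_agree_forward _ _ _ _ _ _ (- t0)
      (locally_lipschitz_opp P HP) (locally_lipschitz_opp Q HQ)
      (solution_reverse _ _ _ _ S1) (solution_reverse _ _ _ _ S2)).
    cbv beta in Hrev. rewrite !Ropp_involutive in Hrev. specialize (Hrev Ex Ey (- t) ltac:(lra)).
    now rewrite !Ropp_involutive in Hrev.
Qed.

(** * Periodic solutions and closed orbits *)

Lemma inf_exists (G : R -> Prop) c : (exists s, G s) -> (forall s, G s -> c <= s) ->
  exists m, (forall s, G s -> m <= s) /\ (forall s, m < s -> exists t, G t /\ t < s).
Proof.
  intros [g Gg] Hc.
  set (LB := fun s => forall t, G t -> s <= t).
  destruct (completeness LB) as [m [Hub Hlub]];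
    [exists g; intros s Hs; now apply Hs | now exists c |].
  exists m. split.
  - intros s Gs. apply Hlub. intros l Hl. now apply Hl.
  - intros s Hs. apply NNPP. intros Hn.
    assert (LBs : LB s).
    { intros t Gt. destruct (Rle_lt_dec s t) as [| Hlt]; [assumption |].
      exfalso. apply Hn. now exists t. }
    specialize (Hub s LBs). lra.
Qed.

(* Otherwise two elements of [G] in [(m, 2m)] would differ by less than [m]. *)
Lemma inf_mem_of_sub_closed (G : R -> Prop) m : 0 < m ->
  (forall s, G s -> m <= s) -> (forall s, m < s -> exists t, G t /\ t < s) ->
  (forall a b, G a -> G b -> b < a -> G (a - b)) -> G m.
Proof.
  intros Hm Hlow Happ Hsub. apply NNPP. intros Hn.
  destruct (Happ (2 * m)) as [t1 [G1 Ht1]]; [lra |].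
  assert (Hmt1 : m < t1).
  { destruct (Rle_lt_dec t1 m) as [Hle | Hlt]; [| exact Hlt].
    replace t1 with m in G1 by (pose proof (Hlow t1 G1); lra). contradiction. }
  destruct (Happ t1 Hmt1) as [t2 [G2 Ht2]].
  pose proof (Hlow t2 G2). pose proof (Hlow _ (Hsub t1 t2 G1 G2 Ht2)). lra.
Qed.

Definition is_period (x y : R -> R) (tau : R) : Prop :=
  forall t, x (t + tau) = x t /\ y (t + tau) = y t.

Lemma is_period_sub x y a b : is_period x y a -> is_period x y b -> is_period x y (a - b).
Proof.
  intros Ha Hb t. destruct (Ha (t - b)) as [A1 A2], (Hb (t - b)) as [B1 B2].
  replace (t - b + a) with (t + (a - b)) in A1, A2 by ring.
  replace (t - b + b) with t in B1, B2 by ring. split; congruence.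
Qed.

Lemma is_derive_zero_of_small_returns f t0 l : is_derive f t0 l ->
  (forall eps, 0 < eps -> exists tau, 0 < tau < eps /\ f (t0 + tau) = f t0) -> l = 0.
Proof.
  intros H Hs. apply is_derive_Reals in H. apply NNPP. intros Hl.
  assert (Hp : 0 < Rabs l) by now apply Rabs_pos_lt.
  destruct (H (Rabs l) Hp) as [d Hd].
  destruct (Hs d (cond_pos d)) as [tau [Ht E]].
  assert (K := Hd tau ltac:(lra) ltac:(rewrite Rabs_pos_eq; lra)).
  rewrite E in K. replace ((f t0 - f t0) / tau - l) with (- l) in K by (field; lra).
  rewrite Rabs_Ropp in K. lra.
Qed.

Section PeriodicSolution.

Variables (P Q : R -> R -> R) (x y : R -> R) (T : R).
Hypotheses (HP : locally_lipschitz P) (HQ : locally_lipschitz Q)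
  (Hsol : solution P Q x y) (HT : 0 < T) (HperT : is_period x y T)
  (Hnc : exists t, (x t, y t) <> (x 0, y 0)).

Lemma vector_field_nonzero t : P (x t) (y t) <> 0 \/ Q (x t) (y t) <> 0.
Proof.
  apply NNPP. intros Hn. apply not_or_and in Hn. destruct Hn as [H1 H2].
  apply NNPP in H1. apply NNPP in H2.
  assert (Hconst : solution P Q (fun _ => x t) (fun _ => y t)).
  { intros s. rewrite H1, H2. split; apply is_derive_Reals, derivable_pt_lim_const. }
  destruct Hnc as [s Hs]. apply Hs.
  destruct (solution_unique P Q _ _ _ _ t HP HQ Hsol Hconst eq_refl eq_refl s) as [-> ->].
  destruct (solution_unique P Q _ _ _ _ t HP HQ Hsol Hconst eq_refl eq_refl 0) as [-> ->].
  reflexivity.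
Qed.

Lemma minimal_period : exists m, 0 < m /\ is_period x y m /\
  forall tau, 0 < tau -> is_period x y tau -> m <= tau.
Proof.
  set (G := fun tau => 0 < tau /\ is_period x y tau).
  destruct (inf_exists G 0) as [m [Hlow Happ]];
    [now exists T | intros s [Hs _]; lra |].
  assert (Hm : 0 < m).
  { apply NNPP. intros Hm.
    assert (Hsmall : forall eps, 0 < eps -> exists tau, 0 < tau < eps /\ is_period x y tau).
    { intros eps He. destruct (Happ eps ltac:(lra)) as [tau [[Ht Hp] Hlt]]. now exists tau. }
    destruct (Hsol 0) as [Dx Dy].
    destruct (vector_field_nonzero 0) as [Hn | Hn]; apply Hn;
      [apply (is_derive_zero_of_small_returns x 0) | apply (is_derive_zero_of_small_returns y 0)];
      auto; intros eps He; destruct (Hsmall eps He) as [tau [Ht Hp]]; exists tau;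
      rewrite Rplus_0_l; split; auto; replace tau with (0 + tau) at 1 by ring; apply Hp. }
  exists m. split; [exact Hm |].
  assert (Gm : G m).
  { apply inf_mem_of_sub_closed; auto.
    intros a b [Ha Pa] [Hb Pb] Hba. split; [lra | now apply is_period_sub]. }
  split; [apply Gm | intros tau Ht Hp; now apply Hlow].
Qed.

Lemma no_return_before_period m :
  (forall tau, 0 < tau -> is_period x y tau -> m <= tau) ->
  forall s t, 0 <= s -> s < t -> t < m -> x s = x t -> y s = y t -> False.
Proof.
  intros Hmin s t Hs Hst Htm Ex Ey.
  assert (Hshift := solution_shift P Q x y (t - s) Hsol).
  replace t with (s + (t - s)) in Ex, Ey by ring.
  assert (Hp : is_period x y (t - s)).
  { intros u. destruct (solution_unique P Q _ _ _ _ s HP HQ Hsol Hshift Ex Ey u); now split. }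
  pose proof (Hmin (t - s) ltac:(lra) Hp). lra.
Qed.

End PeriodicSolution.

Lemma closed_orbit_smooth_closed_curve P Q O : smooth2 P -> smooth2 Q ->
  closed_orbit P Q O -> smooth_closed_curve O.
Proof.
  intros sP sQ [x [y [T [HT [Hs [Hp [Hnc HO]]]]]]].
  assert (HP := smooth2_locally_lipschitz P sP). assert (HQ := smooth2_locally_lipschitz Q sQ).
  destruct (minimal_period P Q x y T HP HQ Hs HT Hp Hnc) as [m [Hm [Hpm Hmin]]].
  destruct (solution_smooth1 P Q x y sP sQ Hs) as [Sx Sy].
  exists x, y, m. do 4 (split; [assumption |]). split; [| split; [| exact HO]].
  - intros s t Hs0 Ht0 Ex Ey.
    destruct (Rtotal_order s t) as [Hlt | [Heq | Hgt]]; [exfalso | exact Heq | exfalso].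
    + apply (no_return_before_period P Q x y HP HQ Hs m Hmin s t); lra.
    + apply (no_return_before_period P Q x y HP HQ Hs m Hmin t s); lra.
  - intros t. destruct (Hs t) as [Dx Dy].
    rewrite (is_derive_unique _ _ _ Dx), (is_derive_unique _ _ _ Dy).
    exact (vector_field_nonzero P Q x y HP HQ Hs Hnc t).
Qed.

Lemma closed_orbits_meeting_eq P Q O1 O2 :
  locally_lipschitz P -> locally_lipschitz Q ->
  closed_orbit P Q O1 -> closed_orbit P Q O2 ->
  forall p, O1 p -> O2 p -> forall q, O1 q <-> O2 q.
Proof.
  intros HP HQ [x1 [y1 [_ [_ [S1 [_ [_ HO1]]]]]]] [x2 [y2 [_ [_ [S2 [_ [_ HO2]]]]]]] p I1 I2.
  destruct (proj1 (HO1 p) I1) as [s ->]. destruct (proj1 (HO2 _) I2) as [t Et].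
  injection Et as Ex Ey.
  replace t with (s + (t - s)) in Ex, Ey by ring.
  assert (U := solution_unique P Q _ _ _ _ s HP HQ S1 (solution_shift P Q x2 y2 (t - s) S2) Ex Ey).
  intros q. rewrite HO1, HO2. split.
  - intros [u ->]. exists (u + (t - s)). now destruct (U u) as [-> ->].
  - intros [v ->]. exists (v - (t - s)). destruct (U (v - (t - s))) as [-> ->].
    now replace (v - (t - s) + (t - s)) with v by ring.
Qed.

Lemma lie_deriv_vanishes_on_closed_orbit P Q O W : smooth2 W -> closed_orbit P Q O ->
  exists p, O p /\ lie_deriv P Q W (fst p) (snd p) = 0.
Proof.
  intros HW [x [y [T [HT [Hs [Hp [_ HO]]]]]]].
  destruct (MVT_cor3 (fun t => W (x t) (y t)) (fun t => lie_deriv P Q W (x t) (y t)) 0 T)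
    as [c [_ [_ E]]]; [exact HT | intros t _ _; now apply is_derive_Reals, is_derive_lie_deriv |].
  destruct (Hp 0) as [E1 E2]. rewrite Rplus_0_l in E1, E2. rewrite E1, E2 in E.
  exists (x c, y c). split; [apply HO; now exists c |]. simpl.
  apply (Rmult_eq_reg_r (T - 0)); lra.
Qed.

(** * Polynomials and the main theorem *)

Fixpoint poly_sum (a : nat -> R) (n : nat) (s : R) : R :=
  match n with
  | O => 0
  | S m => poly_sum a m s + a m * s ^ m
  end.

Lemma poly_sum_zero a n s : (forall k, (k < n)%nat -> a k = 0) -> poly_sum a n s = 0.
Proof.
  induction n as [|n IH]; intros H; simpl; [reflexivity |].
  rewrite IH, H; [ring | lia | intros; apply H; lia].
Qed.

Lemma poly_sum_S a n s : poly_sum a (S n) s = a 0%nat + s * poly_sum (fun k => a (S k)) n s.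
Proof.
  induction n as [|n IH].
  - simpl. ring.
  - change (poly_sum a (S (S n)) s) with (poly_sum a (S n) s + a (S n) * s ^ S n).
    rewrite IH. simpl. ring.
Qed.

Lemma poly_sum_factor n a r : exists b, forall s,
  poly_sum a (S n) s = poly_sum a (S n) r + (s - r) * poly_sum b n s.
Proof.
  revert a; induction n as [|n IH]; intros a.
  - exists (fun _ => 0). intros s. simpl. ring.
  - destruct (IH (fun k => a (S k))) as [b Hb].
    set (b' := fun k => match k with O => poly_sum (fun k => a (S k)) (S n) r | S k => b k end).
    exists b'. intros s.
    rewrite (poly_sum_S b' n s), (poly_sum_S a (S n) s), (poly_sum_S a (S n) r), (Hb s).
    change (b' 0%nat) with (poly_sum (fun k => a (S k)) (S n) r).
    change (fun k => b' (S k)) with b. ring.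
Qed.

(* Factoring out [s - r n] shows that the polynomial vanishes identically; its higher coefficients
   are then recovered by the induction hypothesis at the points [1, ..., n], applied to
   [(p s - a 0) / s]. *)
Lemma poly_sum_roots n : forall a (r : nat -> R),
  (forall i j, (i < n)%nat -> (j < n)%nat -> i <> j -> r i <> r j) ->
  (forall j, (j < n)%nat -> poly_sum a n (r j) = 0) ->
  forall k, (k < n)%nat -> a k = 0.
Proof.
  induction n as [|n IH]; intros a r Hr Hroot k Hk; [lia |].
  destruct (poly_sum_factor n a (r n)) as [b Hb].
  assert (Hb0 : forall k, (k < n)%nat -> b k = 0).
  { apply (IH b r); [intros; apply Hr; lia |].
    intros j Hj. assert (E := Hb (r j)). rewrite !Hroot in E by lia.
    assert (r j - r n <> 0) by (apply Rminus_eq_contra, Hr; lia).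
    apply (Rmult_eq_reg_l (r j - r n)); lra. }
  assert (Hall : forall s, poly_sum a (S n) s = 0).
  { intros s. rewrite Hb, Hroot, (poly_sum_zero b) by (auto || lia). ring. }
  assert (Ha0 : a 0%nat = 0) by (assert (E := Hall 0); rewrite poly_sum_S in E; lra).
  destruct k as [|k]; [exact Ha0 |].
  apply (IH (fun k => a (S k)) (fun j => INR (S j))); [| | lia].
  - intros i j _ _ Hij E. apply INR_eq in E. lia.
  - intros j _. assert (E := Hall (INR (S j))). rewrite poly_sum_S, Ha0 in E.
    assert (INR (S j) <> 0) by (apply not_0_INR; lia).
    apply (Rmult_eq_reg_l (INR (S j))); lra.
Qed.

Lemma poly_sum_coef_zero_of_eq_lie_deriv P Q O n phi a W : smooth2 W ->
  (forall i, (i < n)%nat -> closed_orbit P Q (O i)) ->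
  (forall i j, (i < n)%nat -> (j < n)%nat -> i <> j -> forall p q : R2, O i p -> O j q ->
     phi (fst p) (snd p) <> phi (fst q) (snd q)) ->
  (forall x y, poly_sum a n (phi x y) = lie_deriv P Q W x y) ->
  forall k, (k < n)%nat -> a k = 0.
Proof.
  intros HW Horb Hsep Heq.
  assert (Hroot : forall j, exists p : R2,
             (j < n)%nat -> O j p /\ lie_deriv P Q W (fst p) (snd p) = 0).
  { intros j. destruct (classic (j < n)%nat) as [Hj | Hj].
    - destruct (lie_deriv_vanishes_on_closed_orbit P Q (O j) W HW (Horb j Hj)) as [p Hp].
      now exists p.
    - exists (0, 0). intros; contradiction. }
  destruct (functional_choice _ Hroot) as [p Hp].
  apply (poly_sum_roots n a (fun j => phi (fst (p j)) (snd (p j)))).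
  - intros i j Hi Hj Hij. apply (Hsep i j Hi Hj Hij); now apply Hp.
  - intros j Hj. rewrite Heq. now apply Hp.
Qed.

Lemma subalgebra_Cpow A f k : is_subalgebra A -> A f -> A (fun x y => Cpow (f x y) k).
Proof.
  intros [_ [H1 [_ [_ Hmul]]]] Hf. induction k as [|k IH]; [exact H1 |].
  exact (Hmul _ _ Hf IH).
Qed.

Lemma C_of_real (z : C) : Im z = 0 -> z = RtoC (Re z).
Proof. destruct z as [a b]. simpl. now intros ->. Qed.

Lemma csum_Cpow_of_real (c : nat -> C) (z : C) n : Im z = 0 ->
  Re (csum n (fun i => Cmult (c i) (Cpow z i))) = poly_sum (fun i => Re (c i)) n (Re z) /\
  Im (csum n (fun i => Cmult (c i) (Cpow z i))) = poly_sum (fun i => Im (c i)) n (Re z).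
Proof.
  intros Hz. rewrite (C_of_real z Hz). simpl Re. induction n as [|n [IHre IHim]]; [now split |].
  simpl csum. simpl poly_sum. rewrite <- RtoC_pow, <- IHre, <- IHim.
  destruct (csum n _) as [u v], (c n) as [p q]. simpl. split; ring.
Qed.

Lemma Dop_re_im P Q V x y :
  Re (Dop P Q V x y) = lie_deriv P Q (fun a b => Re (V a b)) x y /\
  Im (Dop P Q V x y) = lie_deriv P Q (fun a b => Im (V a b)) x y.
Proof. unfold Dop, lie_deriv, pdxC, pdyC. simpl. split; ring. Qed.

Lemma csum_Cpow_eq_Dop_coef_zero P Q (O : nat -> R2 -> Prop) n (f V : Cfun) (c : nat -> C) :
  smoothC V -> (forall i, (i < n)%nat -> closed_orbit P Q (O i)) ->
  (forall x y, Im (f x y) = 0) ->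
  (forall i j, (i < n)%nat -> (j < n)%nat -> i <> j -> forall p q : R2, O i p -> O j q ->
     f (fst p) (snd p) <> f (fst q) (snd q)) ->
  (forall x y, csum n (fun i => Cmult (c i) (Cpow (f x y) i)) = Dop P Q V x y) ->
  forall i, (i < n)%nat -> c i = RtoC 0.
Proof.
  intros [HRe HIm] Horb Hreal Hsep Heq i Hi.
  assert (Hsep' : forall i j, (i < n)%nat -> (j < n)%nat -> i <> j -> forall p q : R2,
     O i p -> O j q -> Re (f (fst p) (snd p)) <> Re (f (fst q) (snd q))).
  { intros i' j' Hi' Hj' Hij p q Op Oq E. apply (Hsep i' j' Hi' Hj' Hij p q Op Oq).
    now rewrite (C_of_real _ (Hreal _ _)), E, <- (C_of_real _ (Hreal _ _)). }
  assert (Hre : Re (c i) = 0).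
  { apply (poly_sum_coef_zero_of_eq_lie_deriv P Q O n (fun x y => Re (f x y))
             (fun i => Re (c i)) (fun x y => Re (V x y))); auto.
    intros x y. rewrite <- (proj1 (csum_Cpow_of_real c _ n (Hreal x y))), Heq.
    apply Dop_re_im. }
  assert (Him : Im (c i) = 0).
  { apply (poly_sum_coef_zero_of_eq_lie_deriv P Q O n (fun x y => Re (f x y))
             (fun i => Im (c i)) (fun x y => Im (V x y))); auto.
    intros x y. rewrite <- (proj2 (csum_Cpow_of_real c _ n (Hreal x y))), Heq.
    apply Dop_re_im. }
  rewrite (C_of_real _ Him), Hre. reflexivity.
Qed.

Theorem mainTheorem2 :
  forall (P Q : R -> R -> R) (A : Cfun -> Prop),
    smooth2 P -> smooth2 Q ->
    is_subalgebra A -> self_adjoint A -> separates_compact_submanifolds A ->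
    (forall U, A U -> A (Dop P Q U)) ->
    forall (n : nat) (O : nat -> R2 -> Prop),
      (forall i, (i < n)%nat -> closed_orbit P Q (O i)) ->
      (forall i j, (i < n)%nat -> (j < n)%nat -> i <> j -> ~ (forall p, O i p <-> O j p)) ->
      exists u : nat -> Cfun,
        (forall i, (i < n)%nat -> A (u i)) /\
        (forall c : nat -> C,
           (exists V, A V /\ forall x y, csum n (fun i => Cmult (c i) (u i x y)) = Dop P Q V x y) ->
           forall i, (i < n)%nat -> c i = RtoC 0).
Proof.
  intros P Q A sP sQ HA _ Hsep _ n O Horb Hdist.
  destruct (Hsep n O) as [f [Af [Hreal Hf]]].
  - intros i Hi. exact (closed_orbit_smooth_closed_curve P Q _ sP sQ (Horb i Hi)).
  - intros i j Hi Hj Hij p [Ip Jp]. apply (Hdist i j Hi Hj Hij).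
    exact (closed_orbits_meeting_eq P Q _ _ (smooth2_locally_lipschitz P sP)
             (smooth2_locally_lipschitz Q sQ) (Horb i Hi) (Horb j Hj) p Ip Jp).
  - exists (fun i x y => Cpow (f x y) i). split; [intros i _; now apply subalgebra_Cpow |].
    intros c [V [AV HV]].
    exact (csum_Cpow_eq_Dop_coef_zero P Q O n f V c (proj1 HA V AV) Horb Hreal Hf HV).
Qed.
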